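(* Let $X$ be a compact Hausdorff space and let $\pi:E\to X$ be a surjection of topological spaces each of whose fibres is equipped with the discrete metric (distance $1$ between distinct points). Then $(E,X,\pi)$ is a bundle of complete metric spaces bounded by $1$ if and only if $\pi$ is a local homeomorphism (i.e. $E$ is an étale space over $X$); morphisms of such bundles are exactly continuous maps over $X$. Consequently there is an equivalence of categories $\mathrm{Sh}(X)\simeq\mathrm{LeftUlt}(X,\mathsf{Set})$ between sheaves of sets on $X$ and left ultrafunctors from $X$ to $\mathsf{Set}$.
   Context: A bundle of complete metric spaces bounded by $k$ over $X$: a surjection $\pi:E\to X$ with each fibre a complete metric space with distances $\le k$ such that (1) the global distance $d$ on $E\times_XE=\{(f,g):\pi f=\pi g\}$ (subspace topology of $E\times E$) is upper semicontinuous, i.e. $d^{-1}([0,r))$ is open for all $r$; (2) $\pi$ is continuous and open; (3) for every open $W\subseteq E$ and $f\in W$ there exist an open $V\ni f$ and $\epsilon>0$ with $V\subseteq V_\epsilon\subseteq W$, where $V_\epsilon=\{g:\exists h\in V,\pi g=\pi h,d(g,h)<\epsilon\}$. Morphisms: continuous maps over $X$ that are 1-Lipschitz on fibres. $\mathsf{Set}$ is an ultracategory with ultraproduct $\int_SM_sd\mu=\prod_sM_s/\sim$, where $(a_s)\sim(b_s)$ iff $\{s:a_s=b_s\}\in\mu$ (empty if $\{s:M_s=\emptyset\}\in\mu$). For compact Hausdorff $X$, $\int_Sx_sd\mu$ is the limit of the pushforward of $\mu$ along $s\mapsto x_s$; $\int_S\nu_sd\mu=\{B:\{s:B\in\nu_s\}\in\mu\}$.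 A left ultrafunctor from $X$ to $\mathsf{Set}$: sets $\mathcal F(x)$ and maps $\sigma_\mu:\mathcal F(\int_Sx_sd\mu)\to\int_S\mathcal F(x_s)d\mu$ for every set $S$, family $(x_s)$ and ultrafilter $\mu$ on $S$, such that $\sigma_{\delta_{s_0}}$ composed with $\int_S\mathcal F(x_s)d\delta_{s_0}\cong\mathcal F(x_{s_0})$ is the identity and $\Delta\circ\sigma_{\int_S\nu_sd\mu}=(\int_S\sigma_{\nu_s}d\mu)\circ\sigma_\mu$ with $\Delta((b_t)_t)=((b_t)_t)_s$; morphisms are families of maps $\alpha_x$ commuting with the $\sigma_\mu$. *)

From HB Require Import structures.
From mathcomp Require Import all_boot all_order all_algebra.
From mathcomp Require Import all_classical all_reals.
From mathcomp Require Import topology.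
From mathcomp Require Import Rstruct.
From Stdlib Require Import Rdefinitions.
Set Implicit Arguments. Unset Strict Implicit. Unset Printing Implicit Defensive.
Import Order.TTheory GRing.Theory Num.Theory.
Local Open Scope classical_set_scope.
Local Open Scope ring_scope.

Section Bundles.
Variables (X E : topologicalType) (pi : E -> X) (d : E -> E -> R).

Definition Veps (V : set E) (eps : R) : set E :=
  [set g | exists h, V h /\ pi g = pi h /\ d g h < eps].

Definition fibre_metric : Prop :=
  (forall f, d f f = 0) /\
  (forall f g, pi f = pi g -> d f g = 0 -> f = g) /\
  (forall f g, pi f = pi g -> d f g = d g f) /\
  (forall f g h, pi f = pi g -> pi g = pi h -> d f h <= d f g + d g h) /\
  (forall f g, pi f = pi g -> 0 <= d f g).

Definition fibre_complete : Prop :=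
  forall u : nat -> E, (forall n, pi (u n) = pi (u 0%N)) ->
    (forall eps : R, 0 < eps -> exists N : nat, forall n m : nat, leq N n -> leq N m ->
        d (u n) (u m) < eps) ->
    exists l, pi l = pi (u 0%N) /\
      (forall eps : R, 0 < eps -> exists N : nat, forall n : nat, leq N n -> d (u n) l < eps).

Definition fibre_bounded (k : R) : Prop :=
  forall f g, pi f = pi g -> d f g <= k.

(* (1) d : E x_X E -> R is upper semicontinuous, E x_X E carrying the
   subspace topology of E x E: each d^{-1}([0,r)) is the trace on E x_X E
   of an open subset of E x E *)
Definition dist_usc : Prop :=
  forall r : R, exists U : set (E * E), open U /\
    forall f g, pi f = pi g -> (U (f, g) <-> d f g < r).

Definition is_open_map (p : E -> X) : Prop :=
  forall W : set E, open W -> open (p @` W).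

Definition bundle_cond3 : Prop :=
  forall (W : set E) (f : E), open W -> W f ->
    exists (V : set E) (eps : R), open V /\ V f /\ 0 < eps /\
      V `<=` Veps V eps /\ Veps V eps `<=` W.

Definition is_bundle (k : R) : Prop :=
  (forall x : X, exists e, pi e = x) /\ fibre_metric /\ fibre_complete /\ fibre_bounded k /\
  dist_usc /\ (continuous pi /\ is_open_map pi) /\ bundle_cond3.
End Bundles.

Definition discrete_dist (E : Type) (f g : E) : R := if asbool (f = g) then 0 else 1.

Definition is_bundle_morphism (X E E' : topologicalType) (pi : E -> X) (pi' : E' -> X)
  (d : E -> E -> R) (d' : E' -> E' -> R) (f : E -> E') : Prop :=
  continuous f /\ (forall e, pi' (f e) = pi e) /\
  (forall a b, pi a = pi b -> d' (f a) (f b) <= d a b).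

(* local homeomorphism (etale map): continuous, and each point has an open
   neighbourhood U with pi(U) open and pi : U -> pi(U) a homeomorphism
   (injective on U and mapping open subsets of U to open sets) *)
Definition local_homeomorphism (X E : topologicalType) (pi : E -> X) : Prop :=
  continuous pi /\
  forall e : E, exists U : set E, open U /\ U e /\ open (pi @` U) /\
    {in U &, injective pi} /\
    (forall V : set E, open V -> V `<=` U -> open (pi @` V)).

Record Cat := MkCat {
  ob : Type;
  hom : ob -> ob -> Type;
  idm : forall a, hom a a;
  comp : forall a b c, hom b c -> hom a b -> hom a c }.

Record Functor (C D : Cat) := MkFunctor {
  fob : ob C -> ob D;
  fhom : forall a b, @hom C a b -> @hom D (fob a) (fob b);
  fhom_id : forall a, fhom (@idm C a) = @idm D (fob a);
  fhom_comp : forall a b c (g : @hom C b c) (f : @hom C a b),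
      fhom (comp g f) = comp (fhom g) (fhom f) }.

Definition idFunctor_ob (C : Cat) (a : ob C) := a.

Definition nat_iso (C D : Cat) (F G : ob C -> ob D)
  (Fh : forall a b, @hom C a b -> @hom D (F a) (F b))
  (Gh : forall a b, @hom C a b -> @hom D (G a) (G b)) : Prop :=
  exists (eta : forall a, @hom D (F a) (G a)) (inv : forall a, @hom D (G a) (F a)),
    (forall a, comp (eta a) (inv a) = @idm D (G a)) /\
    (forall a, comp (inv a) (eta a) = @idm D (F a)) /\
    (forall a b (f : @hom C a b), comp (eta b) (Fh a b f) = comp (Gh a b f) (eta a)).

Definition cat_equivalent (C D : Cat) : Prop :=
  exists (F : Functor C D) (G : Functor D C),
    @nat_iso C C (fun a => fob G (fob F a)) (@idFunctor_ob C)
      (fun a b f => fhom G (fhom F f)) (fun a b f => f) /\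
    @nat_iso D D (fun a => fob F (fob G a)) (@idFunctor_ob D)
      (fun a b f => fhom F (fhom G f)) (fun a b f => f).

Section Sheaves.
Variable X : topologicalType.

Definition opens := {U : set X | open U}.
Definition opI (U V : opens) : opens := exist _ (proj1_sig U `&` proj1_sig V)
  (openI (proj2_sig U) (proj2_sig V)).

Record sheaf := MkSheaf {
  sec : opens -> Type;
  res : forall U V : opens, proj1_sig V `<=` proj1_sig U -> sec U -> sec V;
  res_id : forall U (s : sec U), res (@subset_refl _ (proj1_sig U)) s = s;
  res_comp : forall U V W (h1 : proj1_sig V `<=` proj1_sig U)
      (h2 : proj1_sig W `<=` proj1_sig V) (s : sec U),
      res h2 (res h1 s) = res (subset_trans h2 h1) s;
  gluing : forall (I : Type) (U : opens) (Ui : I -> opens)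
      (hsub : forall i, proj1_sig (Ui i) `<=` proj1_sig U),
      proj1_sig U `<=` \bigcup_i proj1_sig (Ui i) ->
      forall s : forall i, sec (Ui i),
      (forall i j, @res (Ui i) (opI (Ui i) (Ui j))
                       (@subIsetl _ (proj1_sig (Ui i)) (proj1_sig (Ui j))) (s i)
                 = @res (Ui j) (opI (Ui i) (Ui j))
                       (@subIsetr _ (proj1_sig (Ui i)) (proj1_sig (Ui j))) (s j)) ->
      exists! t : sec U, forall i, @res U (Ui i) (hsub i) t = s i }.

Definition sheaf_hom (P Q : sheaf) :=
  {a : forall U, sec P U -> sec Q U |
     forall U V (h : proj1_sig V `<=` proj1_sig U) (s : sec P U),
       a V (res h s) = res h (a U s)}.

Definition sheaf_id (P : sheaf) : sheaf_hom P P.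
Proof. by exists (fun U s => s). Defined.

Definition sheaf_comp (P Q T : sheaf) (b : sheaf_hom Q T) (a : sheaf_hom P Q) :
  sheaf_hom P T.
Proof.
exists (fun U s => proj1_sig b U (proj1_sig a U s)).
by move=> U V h s; rewrite (proj2_sig a) (proj2_sig b).
Defined.

Definition Sh : Cat := @MkCat sheaf sheaf_hom sheaf_id sheaf_comp.
End Sheaves.

Definition delta (S : Type) (s0 : S) : set_system S := [set B | B s0].

Definition uint (S T : Type) (mu : set_system S) (nu : S -> set_system T) :
  set_system T := [set B | mu [set s | nu s B]].

(* Elements of the product are represented by
   families defined on a mu-large set (partial families), so that the
   ultraproduct is empty exactly when {s | M_s = emptyset} \in mu; two
   families are identified when they agree (and are defined) mu-a.e.  An
   element of the ultraproduct is an equivalence class. *)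
Section Ultraproduct.
Variables (S : Type) (M : S -> Type) (mu : set_system S).
Definition pfam := forall s, option (M s).
Definition mdef (p : pfam) : Prop := mu [set s | p s <> None].
Definition uagree (p q : pfam) : Prop := mu [set s | p s <> None /\ p s = q s].
Definition is_uclass (C : set pfam) : Prop :=
  exists p, mdef p /\ C = [set q | uagree p q].
Definition ultraprod := {C : set pfam | is_uclass C}.
End Ultraproduct.

Definition umap_set (S : Type) (M N : S -> Type) (mu : set_system S)
  (f : forall s, M s -> N s) (C : set (pfam M)) : set (pfam N) :=
  [set q | exists p, C p /\ mu [set s | exists a, p s = Some a /\ q s = Some (f s a)]].

(* Delta : \int_T M_t d(\int nu_s dmu) -> \int_S (\int_T M_t dnu_s) dmu,
   [(b_t)_t] |-> [([(b_t)_t]_{nu_s})_s], on classes *)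
Definition Delta_set (S T : Type) (M : T -> Type) (mu : set_system S)
  (nu : S -> set_system T) (C : set (pfam M)) :
  set (pfam (fun s : S => ultraprod M (nu s))) :=
  [set q | exists b, C b /\
     mu [set s | exists c : ultraprod M (nu s), q s = Some c /\ proj1_sig c b]].

Section LeftUlt.
Variable X : topologicalType.

(* x is \int_S x_s dmu: the pushforward of mu along s |-> x_s converges to x *)
Definition ulim (S : Type) (mu : set_system S) (xs : S -> X) (x : X) : Prop :=
  nbhs x `<=` [set A | mu (xs @^-1` A)].

Record left_ultrafunctor := MkLU {
  LUF : X -> Type;
  sigma : forall (S : Type) (mu : set_system S), UltraFilter mu ->
    forall (xs : S -> X) (x : X), ulim mu xs x ->
    LUF x -> ultraprod (fun s => LUF (xs s)) mu;
  sigma_delta : forall (S : Type) (s0 : S) (hU : UltraFilter (delta s0))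
    (xs : S -> X) (h : ulim (delta s0) xs (xs s0)) (a : LUF (xs s0)),
    exists p, proj1_sig (sigma hU h a) p /\ p s0 = Some a;
  sigma_assoc : forall (S T : Type) (mu : set_system S) (hmu : UltraFilter mu)
    (nu : S -> set_system T) (hnu : forall s, UltraFilter (nu s))
    (hU : UltraFilter (uint mu nu))
    (xs : T -> X) (ys : S -> X) (x : X)
    (hs : forall s, ulim (nu s) xs (ys s)) (h2 : ulim mu ys x)
    (h1 : ulim (uint mu nu) xs x) (a : LUF x),
    @Delta_set S T (fun t => LUF (xs t)) mu nu (proj1_sig (sigma hU h1 a)) =
    umap_set mu (fun s (b : LUF (ys s)) => sigma (hnu s) (hs s) b)
             (proj1_sig (sigma hmu h2 a)) }.

Definition LU_hom (F G : left_ultrafunctor) :=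
  {al : forall x, LUF F x -> LUF G x |
    forall (S : Type) (mu : set_system S) (hU : UltraFilter mu)
      (xs : S -> X) (x : X) (h : ulim mu xs x) (a : LUF F x),
      umap_set mu (fun s => al (xs s)) (proj1_sig (sigma hU h a)) =
      proj1_sig (sigma hU h (al x a))}.

Lemma umap_id_class (S : Type) (M : S -> Type) (mu : set_system S)
  (hF : Filter mu) (C : set (pfam M)) : is_uclass mu C ->
  umap_set mu (fun s (a : M s) => a) C = C.
Proof.
move=> [p [_ ->]]; rewrite /umap_set /uagree; apply/seteqP; split => q /=.
- move=> [r [Hr Hm]]; apply: filterS (filterI Hr Hm) => s [[Hs1 Hs2] [a [Ha Hq]]].
  by split => //; rewrite Hs2 Ha Hq.
- move=> Hq; exists q; split => //; apply: filterS Hq => s [Hs1 Hs2] /=.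
  move: Hs1; rewrite Hs2; case: (q s) => [a _|//]; by exists a; split.
Qed.

Lemma umap_comp_class (S : Type) (M N K : S -> Type) (mu : set_system S)
  (hF : Filter mu) (f : forall s, M s -> N s) (g : forall s, N s -> K s)
  (C : set (pfam M)) : is_uclass mu C ->
  umap_set mu g (umap_set mu f C) = umap_set mu (fun s a => g s (f s a)) C.
Proof.
move=> [p [_ ->]]; rewrite /umap_set /uagree; apply/seteqP; split => q /=.
- move=> [r [[p' [Hp' Hm1]] Hm2]]; exists p'; split => //.
  apply: filterS (filterI Hm1 Hm2) => s [[a [Ha Hr]] [b [Hb Hq]]].
  by move: Hb Hq; rewrite Hr => -[<-] Hq; exists a.
- move=> [p' [Hp' Hm]].
  exists (fun s => match p' s with Some a => Some (f s a) | None => None end).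
  split.
  + exists p'; split => //; apply: filterS Hm => s [a [Ha _]].
    by exists a; rewrite Ha.
  + apply: filterS Hm => s [a [Ha Hq]]; exists (f s a); by rewrite Ha.
Qed.

Definition LU_id (F : left_ultrafunctor) : LU_hom F F.
Proof.
exists (fun x a => a) => S mu hU xs x h a.
exact: (umap_id_class _ (proj2_sig (sigma hU h a))).
Defined.

Definition LU_comp (F G H : left_ultrafunctor) (be : LU_hom G H) (al : LU_hom F G) :
  LU_hom F H.
Proof.
exists (fun x a => proj1_sig be x (proj1_sig al x a)) => S mu hU xs x h a.
rewrite -(@umap_comp_class _ _ _ _ mu _ (fun s => proj1_sig al (xs s))
  (fun s => proj1_sig be (xs s)) _ (proj2_sig (sigma hU h a))).
by rewrite (proj2_sig al) (proj2_sig be).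
Defined.

Definition LeftUlt : Cat := @MkCat left_ultrafunctor LU_hom LU_id LU_comp.
End LeftUlt.

(* The discrete metric only takes the values 0 and 1, so upper
   semicontinuity of the distance says exactly that the diagonal of E x_X E is
   open, i.e. that pi is locally injective; together with openness of pi this
   is being etale, and the other bundle axioms hold for any discrete bundle.
   Lipschitz conditions are vacuous, distances being at most 1.

   A sheaf P gives the left ultrafunctor of its stalks: sigma_mu sends the germ
   of a section t at x to the class of the germs of t along (x_s).  A left
   ultrafunctor F gives the sheaf whose sections over U are the families
   (s y in F y) that each sigma_mu sends to the class of the family itself.
   A sheaf is recovered from its stalks by gluing.  Conversely, F is recovered
   from the stalks of its sheaf of sections because every a in F x is the value
   at x of such a section near x; this is proved by contradiction, assembling
   the witnesses of failure into an ultrafilter of the form int nu_D dMu and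
   applying the associativity axiom of sigma to it. *)

From mathcomp Require Import all_boot all_order all_algebra.
From mathcomp Require Import all_classical all_reals topology Rstruct.
From Stdlib Require Import Rdefinitions.
Set Implicit Arguments. Unset Strict Implicit. Unset Printing Implicit Defensive.
Import Order.TTheory GRing.Theory Num.Theory.
Local Open Scope classical_set_scope.
Local Open Scope ring_scope.

(** * Discrete bundles are etale spaces *)

Section DiscreteDist.
Variable E : Type.
Implicit Types f g : E.

Lemma discrete_dist_eq0 f g : f = g -> discrete_dist f g = 0.
Proof. by move=> ->; rewrite /discrete_dist asboolT. Qed.

Lemma discrete_dist_neq f g : f <> g -> discrete_dist f g = 1.
Proof. by move=> fg; rewrite /discrete_dist asboolF. Qed.

Lemma discrete_dist_ge0 f g : 0 <= discrete_dist f g.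
Proof.
by have [fg|fg] := pselect (f = g); [rewrite discrete_dist_eq0|rewrite discrete_dist_neq].
Qed.

Lemma discrete_dist_le1 f g : discrete_dist f g <= 1.
Proof.
by have [fg|fg] := pselect (f = g); [rewrite discrete_dist_eq0|rewrite discrete_dist_neq].
Qed.

Lemma discrete_dist_lt_eq (r : R) f g : r <= 1 -> discrete_dist f g < r -> f = g.
Proof.
move=> r1 dr; apply: contrapT => fg.
by move: (lt_le_trans dr r1); rewrite discrete_dist_neq // ltxx.
Qed.

End DiscreteDist.

Lemma open_setX (T U : topologicalType) (A : set T) (B : set U) :
  open A -> open B -> open (A `*` B).
Proof.
move=> oA oB; rewrite openE => -[a b] [/= Aa Bb].
by exists (A, B) => //=; split; exact: open_nbhs_nbhs.
Qed.

Section DiscreteBundles.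
Variables (X E : topologicalType) (pi : E -> X).

Lemma discrete_fibre_metric : fibre_metric pi (@discrete_dist E).
Proof.
split; first by move=> f; rewrite discrete_dist_eq0.
split=> [f g _|].
  have [//|fg] := pselect (f = g).
  by rewrite discrete_dist_neq // => /eqP; rewrite oner_eq0.
split=> [f g _|].
  have [->|fg] := pselect (f = g); first by [].
  by rewrite !discrete_dist_neq //; exact: nesym.
split=> [f g h _ _|f g _]; last exact: discrete_dist_ge0.
have [<-|fg] := pselect (f = g); first by rewrite (@discrete_dist_eq0 _ f f) // add0r.
rewrite (discrete_dist_neq fg); apply: le_trans (discrete_dist_le1 f h) _.
by rewrite lerDl discrete_dist_ge0.
Qed.

(* A discrete Cauchy sequence is eventually constant. *)
Lemma discrete_fibre_complete : fibre_complete pi (@discrete_dist E).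
Proof.
move=> u u_fibre u_cauchy; have [N uN] := u_cauchy 1 ltr01.
exists (u N); split=> // eps eps_gt0; exists N => n Nn.
by rewrite (discrete_dist_lt_eq (lexx 1) (uN n N Nn (leqnn N))) discrete_dist_eq0.
Qed.

Lemma discrete_fibre_bounded : fibre_bounded pi (@discrete_dist E) 1.
Proof. by move=> f g _; exact: discrete_dist_le1. Qed.

Lemma discrete_bundle_cond3 : bundle_cond3 pi (@discrete_dist E).
Proof.
move=> W f oW Wf; exists W, 1; do 2!split=> //; split; first exact: ltr01.
split=> [g Wg|g [h [Wh [_ /(discrete_dist_lt_eq (lexx 1)) ->]]]] //.
by exists g; rewrite discrete_dist_eq0 //; do 2!split=> //; exact: ltr01.
Qed.

Lemma discrete_dist_usc (D : set (E * E)) : open D ->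
  (forall f g, pi f = pi g -> D (f, g) <-> f = g) -> dist_usc pi (@discrete_dist E).
Proof.
move=> oD Dfg r; have [r_le0|r_gt0] := lerP r 0.
  exists set0; split=> [|f g _]; first exact: open0.
  by split=> // dr; move: (lt_le_trans dr r_le0); rewrite ltNge discrete_dist_ge0.
have [r_le1|r_gt1] := lerP r 1; last first.
  exists setT; split=> [|f g _]; first exact: openT.
  by split=> // _; exact: le_lt_trans (discrete_dist_le1 _ _) r_gt1.
exists D; split=> // f g pfg; rewrite Dfg //.
by split=> [->|/(discrete_dist_lt_eq r_le1) //]; rewrite discrete_dist_eq0.
Qed.

Lemma local_homeomorphism_open_map : local_homeomorphism pi -> is_open_map pi.
Proof.
move=> [_ lh] W oW; have [U HU] := choice lh.
have -> : pi @` W = \bigcup_(e in W) pi @` (W `&` U e).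
  apply/seteqP; split=> [y [e We <-]|y [e _ [f [Wf _] <-]]]; last by exists f.
  by exists e => //; exists e => //; split=> //; have [_ []] := HU e.
apply: bigcup_open => e _; have [oU [_ [_ [_ pi_open]]]] := HU e.
by apply: pi_open; [exact: openI|exact: subIsetr].
Qed.

Lemma local_homeomorphism_open_diagonal : local_homeomorphism pi ->
  exists D : set (E * E), open D /\ forall f g, pi f = pi g -> D (f, g) <-> f = g.
Proof.
move=> [_ lh]; have [U HU] := choice lh.
exists (\bigcup_e (U e `*` U e)); split.
  by apply: bigcup_open => e _; have [oU _] := HU e; exact: open_setX.
move=> f g pfg; split=> [[e _ [/= Uef Ueg]]|<-].
  by have [_ [_ [_ [pi_inj _]]]] := HU e; apply: pi_inj; rewrite ?inE.
by exists f => //; have [_ [Uf _]] := HU f.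
Qed.

Lemma discrete_bundle_local_homeomorphism :
  is_bundle pi (@discrete_dist E) 1 -> local_homeomorphism pi.
Proof.
move=> [_ [_ [_ [_ [usc [[pi_cont pi_open] _]]]]]]; split=> // e.
have [D [oD HD]] := usc 1.
have /open_nbhs_nbhs [[A B] /= [nA nB] sABD] : open_nbhs (e, e) D.
  by split=> //; apply/HD => //; rewrite discrete_dist_eq0 //; exact: ltr01.
have oAB : open (A° `&` B°) by apply: openI; exact: open_interior.
exists (A° `&` B°); split=> //; split.
  by split; apply: nbhs_singleton; exact: nbhs_interior.
split; first exact: pi_open.
split=> [|V oV _]; last exact: pi_open.
move=> f g /[!inE] -[Af _] [_ Bg] pfg; apply: (discrete_dist_lt_eq (lexx 1)).
by apply/(HD f g pfg)/sABD; split; exact: interior_subset.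
Qed.

Lemma local_homeomorphism_discrete_bundle : (forall x : X, exists e, pi e = x) ->
  local_homeomorphism pi -> is_bundle pi (@discrete_dist E) 1.
Proof.
move=> pi_surj lh; have [D [oD HD]] := local_homeomorphism_open_diagonal lh.
split=> //; split; first exact: discrete_fibre_metric.
split; first exact: discrete_fibre_complete.
split; first exact: discrete_fibre_bounded.
split; first exact: discrete_dist_usc oD HD.
split; last exact: discrete_bundle_cond3.
by split; [exact: lh.1|exact: local_homeomorphism_open_map].
Qed.

End DiscreteBundles.

Lemma discrete_bundle_morphismP (X E E' : topologicalType) (pi : E -> X) (pi' : E' -> X)
    (f : E -> E') :
  is_bundle_morphism pi pi' (@discrete_dist E) (@discrete_dist E') f <->
  continuous f /\ forall e, pi' (f e) = pi e.
Proof.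
split=> [[f_cont [f_over _]] //|[f_cont f_over]]; split=> //; split=> // a b _.
have [->|ab] := pselect (a = b); first by rewrite !discrete_dist_eq0.
by rewrite (discrete_dist_neq ab) discrete_dist_le1.
Qed.

(** * Ultrafilters and ultraproducts *)

Lemma ultra_filter_setVsetC (T : Type) (F : set_system T) : ProperFilter F ->
  (forall A, F A \/ F (~` A)) -> UltraFilter F.
Proof.
move=> PF FAC; split=> // G PG FG; apply/seteqP; split=> // A GA.
have [//|/FG GCA] := FAC A.
have : G (A `&` ~` A) by exact: filterI.
by rewrite setICr => /filter_not_empty.
Qed.

Lemma delta_principal (S : Type) (s0 : S) : delta s0 = principal_filter s0.
Proof. by apply/funext => B; apply/propext; rewrite principal_filterP. Qed.

Lemma delta_ultra (S : Type) (s0 : S) : UltraFilter (delta s0).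
Proof. by rewrite delta_principal; exact: principal_filter_ultra. Qed.

Section UltraIntegral.
Variables (S T : Type) (mu : set_system S) (nu : S -> set_system T).

#[global] Instance uint_filter {Fmu : Filter mu} {Fnu : forall s, Filter (nu s)} :
  Filter (uint mu nu).
Proof.
split=> [|A B|A B AB]; rewrite /uint /=.
- by apply: filterS filterT => s _; exact: filterT.
- by move=> muA muB; apply: filterS (filterI muA muB) => s [nuA nuB]; exact: filterI.
- by apply: filterS => s; exact: filterS.
Qed.

Lemma uint_proper : ProperFilter mu -> (forall s, ProperFilter (nu s)) ->
  ProperFilter (uint mu nu).
Proof.
move=> Pmu Pnu; split; last exact: uint_filter.
rewrite /uint /= => mu0; apply: (filter_not_empty mu).
by apply: filterS mu0 => s /filter_not_empty.
Qed.

Lemma uint_ultra : UltraFilter mu -> (forall s, UltraFilter (nu s)) ->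
  UltraFilter (uint mu nu).
Proof.
move=> Umu Unu; apply: ultra_filter_setVsetC; first exact: uint_proper.
move=> A; have [muA|muCA] := in_ultra_setVsetC [set s | nu s A] Umu; [left|right] => //.
by apply: filterS muCA => s /= nuA; have [|] := in_ultra_setVsetC A (Unu s).
Qed.

End UltraIntegral.

Lemma ulim_open (X : topologicalType) (S : Type) (mu : set_system S) (xs : S -> X)
    (x : X) (O : set X) :
  ulim mu xs x -> open O -> O x -> mu [set s | O (xs s)].
Proof. by move=> xs_x oO Ox; apply: xs_x; exact: open_nbhs_nbhs. Qed.

Lemma ulim_delta (X : topologicalType) (S : Type) (s0 : S) (xs : S -> X) :
  ulim (delta s0) xs (xs s0).
Proof. by move=> A /nbhs_singleton. Qed.

Lemma ultra_ulim_meets (X : topologicalType) (x : X) (B : set X) :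
  (forall N, nbhs x N -> exists z, N z /\ B z) ->
  exists nu : set_system X, UltraFilter nu /\ ulim nu id x /\ nu B.
Proof.
move=> meetsB; pose G := [set A : set X | exists N, nbhs x N /\ N `&` B `<=` A].
have PG : ProperFilter G.
  apply: Build_ProperFilter_ex => [A [N [nN NBA]]|].
    by have [z [Nz Bz]] := meetsB N nN; exists z; exact: NBA.
  split=> [|A1 A2 [N1 [n1 s1]] [N2 [n2 s2]]|A1 A2 A12 [N [nN NA]]].
  - by exists setT; split=> //; exact: filterT.
  - exists (N1 `&` N2); split; first exact: filterI.
    by move=> z [[N1z N2z] Bz]; split; [exact: s1|exact: s2].
  - by exists N; split=> // z /NA /A12.
have [nu [Unu Gnu]] := ultraFilterLemma PG.
exists nu; split=> //; split=> [A nA|]; apply: Gnu.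
  by exists A; split=> // z [].
by exists setT; split=> [|z []]; first exact: filterT.
Qed.

Lemma ultra_tail (T : Type) (nu : set_system T) : ProperFilter nu ->
  exists Mu : set_system {D : set T | nu D}, UltraFilter Mu /\
    forall D0, nu D0 -> Mu [set D | proj1_sig D `<=` D0].
Proof.
move=> Pnu; pose G := [set P : set {D : set T | nu D} | exists D0, nu D0 /\
  forall D : {D : set T | nu D}, proj1_sig D `<=` D0 -> P D].
have PG : ProperFilter G.
  apply: Build_ProperFilter_ex => [A [D0 [nD0 D0A]]|].
    by exists (exist _ D0 nD0); exact: D0A.
  split=> [|A1 A2 [D1 [n1 s1]] [D2 [n2 s2]]|A1 A2 A12 [D0 [nD0 D0A]]].
  - by exists setT; split=> //; exact: filterT.
  - exists (D1 `&` D2); split; first exact: filterI.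
    by move=> D hD; split; [apply: s1|apply: s2] => z /hD [].
  - by exists D0; split=> // D /D0A /A12.
have [Mu [UMu GMu]] := ultraFilterLemma PG.
by exists Mu; split=> // D0 nD0; apply: GMu; exists D0.
Qed.

Section UltraproductClasses.
Variables (S : Type) (M : S -> Type) (mu : set_system S).
Context {mu_filter : Filter mu}.
Implicit Types (p q r : pfam M) (C D : set (pfam M)).

Definition class_of p : set (pfam M) := [set q | uagree mu p q].

Lemma uagree_sym p q : uagree mu p q -> uagree mu q p.
Proof. by apply: filterS => s [ps_def pq]; split; rewrite -pq. Qed.

Lemma uagree_trans p q r : uagree mu p q -> uagree mu q r -> uagree mu p r.
Proof.
by move=> pq qr; apply: filterS (filterI pq qr) => s [[? pqs] [_ qrs]]; split=> //; rewrite pqs.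
Qed.

Lemma uagree_refl p : mdef mu p -> uagree mu p p.
Proof. by apply: filterS. Qed.

Lemma class_of_uclass p : mdef mu p -> is_uclass mu (class_of p).
Proof. by exists p. Qed.

Lemma class_of_mem p : mdef mu p -> class_of p p.
Proof. exact: uagree_refl. Qed.

Lemma class_of_agree p q : uagree mu p q -> class_of p = class_of q.
Proof.
move=> pq; apply/seteqP; split=> r /=; last exact: uagree_trans.
exact: uagree_trans (uagree_sym pq).
Qed.

Lemma uclass_inhabited C : is_uclass mu C -> exists p, C p.
Proof. by move=> [p [p_def ->]]; exists p; exact: uagree_refl. Qed.

Lemma uclass_closed C p q : is_uclass mu C -> C p -> uagree mu p q -> C q.
Proof. by move=> [p0 [_ ->]]; exact: uagree_trans. Qed.

Lemma uclass_agree C p q : is_uclass mu C -> C p -> C q -> uagree mu p q.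
Proof. by move=> [p0 [_ ->]] p0p; apply: uagree_trans; exact: uagree_sym. Qed.

Lemma uclass_mdef C p : is_uclass mu C -> C p -> mdef mu p.
Proof. by move=> C_cl Cp; apply: filterS (uclass_agree C_cl Cp Cp) => s []. Qed.

Lemma uclass_class_of C p : is_uclass mu C -> C p -> C = class_of p.
Proof.
move=> C_cl Cp; apply/seteqP; split=> q; first exact: uclass_agree.
exact: uclass_closed.
Qed.

Lemma uclass_eq C D p : is_uclass mu C -> is_uclass mu D -> C p -> D p -> C = D.
Proof. by move=> C_cl D_cl Cp Dp; rewrite (uclass_class_of C_cl Cp) (uclass_class_of D_cl Dp). Qed.

Definition mkclass p (p_def : mdef mu p) : ultraprod M mu :=
  exist _ (class_of p) (class_of_uclass p_def).

End UltraproductClasses.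

Lemma ultraprod_eq (S : Type) (M : S -> Type) (mu : set_system S) (c d : ultraprod M mu) :
  proj1_sig c = proj1_sig d -> c = d.
Proof. by case: c d => [c c_cl] [d d_cl] /= cd; subst d; congr exist; exact: Prop_irrelevance. Qed.

Definition pfam_map (S : Type) (M N : S -> Type) (f : forall s, M s -> N s) (p : pfam M) :
  pfam N := fun s => if p s is Some a then Some (f s a) else None.

Section UltraproductMaps.
Variables (S : Type) (M N : S -> Type) (mu : set_system S).
Context {mu_filter : Filter mu}.

Lemma umap_class_of (f : forall s, M s -> N s) (p : pfam M) : mdef mu p ->
  umap_set mu f (class_of mu p) = class_of mu (pfam_map f p).
Proof.
move=> p_def; apply/seteqP; split=> q.
  move=> [p' [pp' p'q]]; apply: filterS (filterI pp' p'q) => s [[_ pp's] [a [p's qs]]].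
  by rewrite /pfam_map /= pp's p's qs.
move=> pq; exists p; split; first exact: class_of_mem.
apply: filterS pq => s; rewrite /pfam_map /=.
by case: (p s) => [a [_ <-]|[]]; first by exists a.
Qed.

Lemma umap_pfam_map (f : forall s, M s -> N s) (C : set (pfam M)) (p : pfam M) :
  is_uclass mu C -> C p -> umap_set mu f C (pfam_map f p).
Proof.
move=> C_cl Cp; have p_def : mdef mu p by exact: uclass_mdef C_cl Cp.
rewrite (uclass_class_of C_cl Cp) umap_class_of //.
apply: (class_of_mem (M := N)).
by apply: filterS p_def => s; rewrite /pfam_map /=; case: (p s).
Qed.

End UltraproductMaps.

Lemma Delta_class_of (S T : Type) (M : T -> Type) (mu : set_system S)
    (nu : S -> set_system T) {mu_filter : Filter mu} {nu_filter : forall s, Filter (nu s)}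
    (C : set (pfam M)) (b : pfam M) (q : pfam (fun s => ultraprod M (nu s))) :
  is_uclass (uint mu nu) C -> C b ->
  mu [set s | exists c, q s = Some c /\ proj1_sig c b] ->
  Delta_set mu (nu := nu) C = class_of mu q.
Proof.
move=> C_cl Cb qb; apply/seteqP; split=> q'.
  move=> [b' [Cb' q'b']]; have bb' : uagree (uint mu nu) b b' by exact: uclass_agree C_cl Cb Cb'.
  apply: filterS (filterI qb (filterI q'b' bb')) => s [[c [qs cb]] [[c' [q's c'b']] bb's]].
  rewrite /= qs q's; split=> //; congr Some; apply: ultraprod_eq.
  apply: (uclass_eq (proj2_sig c) (proj2_sig c') _ c'b').
  exact: uclass_closed (proj2_sig c) cb bb's.
move=> qq'; exists b; split=> //.
by apply: filterS (filterI qb qq') => s [[c [qs cb]] [_ qq's]]; exists c; rewrite -qq's.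
Qed.

Section LeftUltrafunctorFacts.
Variables (X : topologicalType) (F : left_ultrafunctor X).

Lemma sigma_irr (S : Type) (mu mu' : set_system S) (mu_mu' : mu = mu')
    (hU : UltraFilter mu) (hU' : UltraFilter mu') (xs : S -> X) (x : X)
    (h : ulim mu xs x) (h' : ulim mu' xs x) (a : LUF F x) :
  proj1_sig (sigma hU h a) = proj1_sig (sigma hU' h' a).
Proof. by subst mu'; rewrite (Prop_irrelevance hU hU') (Prop_irrelevance h h'). Qed.

Lemma sigma_delta_at (S : Type) (s0 : S) (hU : UltraFilter (delta s0)) (xs : S -> X)
    (h : ulim (delta s0) xs (xs s0)) (a : LUF F (xs s0)) (q : pfam (fun s => LUF F (xs s))) :
  proj1_sig (sigma hU h a) q -> q s0 = Some a.
Proof.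
move=> aq; have [p [ap ps0]] := sigma_delta hU h a.
have : uagree (delta s0) p q by exact: uclass_agree (proj2_sig _) ap aq.
by rewrite /uagree /delta /= ps0 => -[_ <-].
Qed.

(* The associativity axiom, read on representatives: if [p] represents
   [sigma_mu a] and [b] represents [sigma_{int nu dmu} a], then for mu-almost
   every [s], [b] represents [sigma_{nu s} (p s)]. *)
Lemma sigma_assoc_ae (S T : Type) (mu : set_system S) (hmu : UltraFilter mu)
    (nu : S -> set_system T) (hnu : forall s, UltraFilter (nu s))
    (hU : UltraFilter (uint mu nu)) (xs : T -> X) (ys : S -> X) (x : X)
    (hs : forall s, ulim (nu s) xs (ys s)) (h2 : ulim mu ys x)
    (h1 : ulim (uint mu nu) xs x) (a : LUF F x)
    (p : pfam (fun s => LUF F (ys s))) (b : pfam (fun t => LUF F (xs t))) :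
  proj1_sig (sigma hmu h2 a) p -> proj1_sig (sigma hU h1 a) b ->
  mu [set s | exists e, p s = Some e /\ proj1_sig (sigma (hnu s) (hs s) e) b].
Proof.
move=> ap ab.
have [b' [ab' pb']] : Delta_set mu (nu := nu) (proj1_sig (sigma hU h1 a))
    (pfam_map (fun s => sigma (hnu s) (hs s)) p).
  by rewrite (sigma_assoc hmu hnu hU hs h2 h1); exact: umap_pfam_map (proj2_sig _) ap.
have bb' : uagree (uint mu nu) b b' by exact: uclass_agree (proj2_sig _) ab ab'.
apply: filterS (filterI pb' bb') => s [[c [pcs cb']] bb's].
have [e [pse ce]] : exists e, p s = Some e /\ c = sigma (hnu s) (hs s) e.
  by move: pcs; rewrite /pfam_map; case: (p s) => [e [<-]|//]; exists e.
rewrite ce in cb'; exists e; split=> //.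
exact: uclass_closed (proj2_sig _) cb' (uagree_sym bb's).
Qed.

Lemma sigma_const (S : Type) (mu : set_system S) (hU : UltraFilter mu) (x : X)
    (h : ulim mu (fun _ => x) x) (a : LUF F x) :
  proj1_sig (sigma hU h a) (fun _ => Some a).
Proof.
pose nu := fun _ : S => delta tt.
have hnu : forall s, UltraFilter (nu s) := fun _ => delta_ultra tt.
have hs : forall s, ulim (nu s) (fun _ => x) x by move=> s; exact: ulim_delta.
have h1 : ulim (uint mu nu) (fun _ => x) x.
  by move=> A /nbhs_singleton Ax; rewrite /uint /=; apply: filterS filterT.
have nu_tt : uint mu nu = delta tt.
  apply/funext => B; apply/propext; split=> [muB|Btt]; last first.
    by rewrite /uint /=; apply: filterS filterT.
  apply: contrapT => nBtt; apply: (filter_not_empty mu).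
  by move: muB; rewrite /uint /=; apply: filterS.
have hd : ulim (delta tt) (fun _ => x) x := ulim_delta (s0 := tt) (xs := fun _ => x).
have hU1 := uint_ultra hU hnu.
have [p ap] := uclass_inhabited (proj2_sig (sigma hU h a)).
have [b ab] := uclass_inhabited (proj2_sig (sigma hU1 h1 a)).
have btt : b tt = Some a.
  move: ab; rewrite (sigma_irr nu_tt hU1 (delta_ultra tt) h1 hd).
  exact: sigma_delta_at.
apply: (uclass_closed (proj2_sig _) ap); rewrite /uagree.
apply: filterS (sigma_assoc_ae hnu hs ap ab) => s [e [pse eb]].
by rewrite /= pse -btt (sigma_delta_at eb).
Qed.

Lemma sigma_pushforward (S : Type) (mu : set_system S) (hU : UltraFilter mu)
    (xs : S -> X) (y : X) (h : ulim mu xs y) (a : LUF F y) (b : pfam (fun z => LUF F z)) :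
  (forall (hU' : UltraFilter (uint mu (fun s => delta (xs s))))
     (h' : ulim (uint mu (fun s => delta (xs s))) id y), proj1_sig (sigma hU' h' a) b) ->
  proj1_sig (sigma hU h a) (fun s => b (xs s)).
Proof.
move=> ab; pose nu := fun s => delta (xs s).
have hnu : forall s, UltraFilter (nu s) := fun s => delta_ultra (xs s).
have hs : forall s, ulim (nu s) id (xs s) by move=> s; exact: ulim_delta.
have hU1 := uint_ultra hU hnu.
have [p ap] := uclass_inhabited (proj2_sig (sigma hU h a)).
apply: (uclass_closed (proj2_sig _) ap); rewrite /uagree.
apply: filterS (sigma_assoc_ae hnu hs ap (ab hU1 h)) => s [e [pse eb]].
by rewrite /= pse (sigma_delta_at eb).
Qed.

End LeftUltrafunctorFacts.

(** * The sheaf of sections of a left ultrafunctor *)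

Lemma LU_hom_eq (X : topologicalType) (F G : left_ultrafunctor X) (al be : LU_hom F G) :
  proj1_sig al = proj1_sig be -> al = be.
Proof.
by case: al be => [a a_hom] [b b_hom] /= ab; subst b; congr exist; exact: Prop_irrelevance.
Qed.

Lemma sheaf_hom_eq (X : topologicalType) (P Q : sheaf X) (al be : sheaf_hom P Q) :
  proj1_sig al = proj1_sig be -> al = be.
Proof.
by case: al be => [a a_nat] [b b_nat] /= ab; subst b; congr exist; exact: Prop_irrelevance.
Qed.

Section CompatibleSections.
Variables (X : topologicalType) (F : left_ultrafunctor X).

Definition section_family (U : set X) (s : forall y, U y -> LUF F y) (S : Type) (xs : S -> X) :
  pfam (fun i => LUF F (xs i)) :=
  fun i => if pselect (U (xs i)) is left Uxi then Some (s (xs i) Uxi) else None.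

Lemma section_family_in (U : set X) (s : forall y, U y -> LUF F y) (S : Type) (xs : S -> X) i
    (Uxi : U (xs i)) :
  section_family s xs i = Some (s (xs i) Uxi).
Proof.
by rewrite /section_family; case: pselect => // Uxi'; rewrite (Prop_irrelevance Uxi' Uxi).
Qed.

Definition compatible (U : set X) (s : forall y, U y -> LUF F y) : Prop :=
  forall (S : Type) (mu : set_system S) (hU : UltraFilter mu) (xs : S -> X) (y : X)
    (Uy : U y) (h : ulim mu xs y), proj1_sig (sigma hU h (s y Uy)) (section_family s xs).

Definition csec (U : opens X) := {s : forall y, proj1_sig U y -> LUF F y | compatible s}.

Lemma csec_eq (U : opens X) (s1 s2 : csec U) :
  (forall y Uy, proj1_sig s1 y Uy = proj1_sig s2 y Uy) -> s1 = s2.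
Proof.
case: s1 s2 => [f1 c1] [f2 c2] /= f12.
have f1f2 : f1 = f2 by do 2!apply: functional_extensionality_dep => ?; exact: f12.
by subst f2; congr exist; exact: Prop_irrelevance.
Qed.

Lemma section_family_agree (U V W : set X) (s : forall y, U y -> LUF F y)
    (t : forall y, V y -> LUF F y) (S : Type) (mu : set_system S) (xs : S -> X) :
  Filter mu -> mu [set i | W (xs i)] -> W `<=` U -> W `<=` V ->
  (forall z (Uz : U z) (Vz : V z), W z -> s z Uz = t z Vz) ->
  uagree mu (section_family s xs) (section_family t xs).
Proof.
move=> mu_filter muW WU WV st; apply: filterS muW => i /= Wxi.
rewrite (section_family_in s (WU _ Wxi)) (section_family_in t (WV _ Wxi)).
by split=> //; congr Some; exact: st.
Qed.

Lemma cres_compatible (U V : opens X) (VU : proj1_sig V `<=` proj1_sig U) (s : csec U) :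
  compatible (fun y (Vy : proj1_sig V y) => proj1_sig s y (VU y Vy)).
Proof.
move=> S mu hU xs y Vy h.
apply: (uclass_closed (proj2_sig _) (proj2_sig s S mu hU xs y (VU y Vy) h)).
apply: (section_family_agree _ (ulim_open h (proj2_sig V) Vy) VU (@subset_refl _ _)).
by move=> z Uz Vz _; rewrite (Prop_irrelevance Uz (VU z Vz)).
Qed.

Definition cres (U V : opens X) (VU : proj1_sig V `<=` proj1_sig U) (s : csec U) : csec V :=
  exist _ _ (cres_compatible VU s).

Lemma cres_id (U : opens X) (s : csec U) : cres (@subset_refl _ (proj1_sig U)) s = s.
Proof. by apply: csec_eq => y Uy /=; congr (proj1_sig s y); exact: Prop_irrelevance. Qed.

Lemma cres_comp (U V W : opens X) (VU : proj1_sig V `<=` proj1_sig U)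
    (WV : proj1_sig W `<=` proj1_sig V) (s : csec U) :
  cres WV (cres VU s) = cres (subset_trans WV VU) s.
Proof. by apply: csec_eq => y Wy /=; congr (proj1_sig s y); exact: Prop_irrelevance. Qed.

Lemma cres_glue (I : Type) (U : opens X) (Ui : I -> opens X)
    (UiU : forall i, proj1_sig (Ui i) `<=` proj1_sig U) :
  proj1_sig U `<=` \bigcup_i proj1_sig (Ui i) ->
  forall s : forall i, csec (Ui i),
  (forall i j, cres (V := opI (Ui i) (Ui j)) (@subIsetl _ _ _) (s i) =
               cres (V := opI (Ui i) (Ui j)) (@subIsetr _ _ _) (s j)) ->
  exists! t : csec U, forall i, cres (UiU i) t = s i.
Proof.
move=> U_cover s s_agree.
have s_overlap i j z (Uiz : proj1_sig (Ui i) z) (Ujz : proj1_sig (Ui j) z) :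
    proj1_sig (s i) z Uiz = proj1_sig (s j) z Ujz.
  have := congr1 (fun r => proj1_sig r z (conj Uiz Ujz)) (s_agree i j) => /=.
  by rewrite (Prop_irrelevance (subIsetl _) Uiz) (Prop_irrelevance (subIsetr _) Ujz).
have idx_ex y : proj1_sig U y -> exists i, proj1_sig (Ui i) y.
  by move=> /U_cover [i _ Uiy]; exists i.
pose idx y Uy := proj1_sig (cid (idx_ex y Uy)).
have idxP y Uy : proj1_sig (Ui (idx y Uy)) y := proj2_sig (cid (idx_ex y Uy)).
pose t0 := fun y (Uy : proj1_sig U y) => proj1_sig (s (idx y Uy)) y (idxP y Uy).
have t0_compat : compatible t0.
  move=> S mu hU xs y Uy h; pose i := idx y Uy.
  apply: (uclass_closed (proj2_sig _) (proj2_sig (s i) S mu hU xs y (idxP y Uy) h)).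
  apply: (section_family_agree _ (ulim_open h (proj2_sig (Ui i)) (idxP y Uy))
    (@subset_refl _ _) (UiU i)).
  by move=> z Uiz Uz _; rewrite /t0 (s_overlap _ (idx z Uz) z Uiz (idxP z Uz)).
exists (exist _ t0 t0_compat); split=> [i|t' t'_res].
  by apply: csec_eq => y Uiy /=; rewrite /t0; exact: s_overlap.
apply: csec_eq => y Uy /=; rewrite /t0.
have := congr1 (fun r => proj1_sig r y (idxP y Uy)) (t'_res (idx y Uy)) => /= <-.
by congr (proj1_sig t' y); exact: Prop_irrelevance.
Qed.

Definition section_sheaf : sheaf X := @MkSheaf X csec cres cres_id cres_comp cres_glue.

(* Two sections agreeing at [x] agree near [x]: otherwise an ultrafilter
   converging to [x] would see them disagree almost everywhere, contradicting
   the fact that [sigma] sends their common value to a single class. *)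
Lemma csec_agree_near (U1 U2 : opens X) (s1 : csec U1) (s2 : csec U2) (x : X)
    (U1x : proj1_sig U1 x) (U2x : proj1_sig U2 x) :
  proj1_sig s1 x U1x = proj1_sig s2 x U2x ->
  exists N, nbhs x N /\ forall z (U1z : proj1_sig U1 z) (U2z : proj1_sig U2 z), N z ->
    proj1_sig s1 z U1z = proj1_sig s2 z U2z.
Proof.
move=> s12x; apply: contrapT => not_near.
pose B := [set z | exists (U1z : proj1_sig U1 z) (U2z : proj1_sig U2 z),
  proj1_sig s1 z U1z <> proj1_sig s2 z U2z].
have [nu [Unu [nu_x nuB]]] : exists nu : set_system X, UltraFilter nu /\ ulim nu id x /\ nu B.
  apply: ultra_ulim_meets => N nN; apply: contrapT => NB; apply: not_near.
  exists N; split=> // z U1z U2z Nz; apply: contrapT => s12z; apply: NB.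
  by exists z; split=> //; exists U1z, U2z.
have s1_cl := proj2_sig s1 X nu Unu id x U1x nu_x.
have s2_cl := proj2_sig s2 X nu Unu id x U2x nu_x.
rewrite s12x in s1_cl.
have s12 : uagree nu (section_family (proj1_sig s1) id) (section_family (proj1_sig s2) id).
  exact: uclass_agree (proj2_sig _) s1_cl s2_cl.
apply: (filter_not_empty nu); apply: filterS (filterI s12 nuB) => z [[_ s12z] [U1z [U2z]]].
by move: s12z; rewrite (section_family_in (xs := id) (i := z) _ U1z)
  (section_family_in (xs := id) (i := z) _ U2z) => -[].
Qed.

End CompatibleSections.

Section SectionFunctor.
Variable X : topologicalType.

Lemma csec_map_compatible (F G : left_ultrafunctor X) (al : LU_hom F G) (U : opens X)
    (s : csec F U) :
  compatible (fun y (Uy : proj1_sig U y) => proj1_sig al y (proj1_sig s y Uy)).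
Proof.
move=> S mu hU xs y Uy h; rewrite -(proj2_sig al).
have -> : section_family (fun y Uy => proj1_sig al y (proj1_sig s y Uy)) xs =
          pfam_map (fun i => proj1_sig al (xs i)) (section_family (proj1_sig s) xs).
  by apply: functional_extensionality_dep => i; rewrite /pfam_map /section_family; case: pselect.
exact: umap_pfam_map (proj2_sig _) (proj2_sig s S mu hU xs y Uy h).
Qed.

Definition csec_map (F G : left_ultrafunctor X) (al : LU_hom F G) :
  sheaf_hom (section_sheaf F) (section_sheaf G).
Proof.
by exists (fun U s => exist _ _ (csec_map_compatible al s)) => U V VU s; exact: csec_eq.
Defined.

Lemma csec_map_id (F : left_ultrafunctor X) : csec_map (LU_id F) = sheaf_id (section_sheaf F).
Proof. by apply: sheaf_hom_eq; do 2!apply: functional_extensionality_dep => ?; exact: csec_eq. Qed.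

Lemma csec_map_comp (F G H : left_ultrafunctor X) (be : LU_hom G H) (al : LU_hom F G) :
  csec_map (LU_comp be al) = sheaf_comp (csec_map be) (csec_map al).
Proof. by apply: sheaf_hom_eq; do 2!apply: functional_extensionality_dep => ?; exact: csec_eq. Qed.

Definition section_functor : Functor (LeftUlt X) (Sh X) :=
  @MkFunctor (LeftUlt X) (Sh X) (@section_sheaf X) (@csec_map) csec_map_id csec_map_comp.

End SectionFunctor.

(** * The stalk ultrafunctor of a sheaf *)

Section Stalks.
Variables (X : topologicalType) (P : sheaf X).

Lemma res_irr (U V : opens X) (VU VU' : proj1_sig V `<=` proj1_sig U) (t : sec P U) :
  res VU t = res VU' t.
Proof. by rewrite (Prop_irrelevance VU VU'). Qed.

Lemma res_res (U V W : opens X) (VU : proj1_sig V `<=` proj1_sig U)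
    (WV : proj1_sig W `<=` proj1_sig V) (WU : proj1_sig W `<=` proj1_sig U) (t : sec P U) :
  res WV (res VU t) = res WU t.
Proof. by rewrite res_comp; exact: res_irr. Qed.

Lemma res_refl (U : opens X) (UU : proj1_sig U `<=` proj1_sig U) (t : sec P U) :
  res UU t = t.
Proof. by rewrite (res_irr UU (@subset_refl _ _)) res_id. Qed.

Record nsec (x : X) := NSec { nsU : opens X; nsx : proj1_sig nsU x; nss : sec P nsU }.

Definition germ_eqv x (p q : nsec x) : Prop :=
  exists W : opens X, proj1_sig W x /\
    exists (WUp : proj1_sig W `<=` proj1_sig (nsU p)) (WUq : proj1_sig W `<=` proj1_sig (nsU q)),
      res WUp (nss p) = res WUq (nss q).

Lemma germ_eqv_refl x (p : nsec x) : germ_eqv p p.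
Proof. by exists (nsU p); split; [exact: nsx|exists (@subset_refl _ _), (@subset_refl _ _)]. Qed.

Lemma germ_eqv_sym x (p q : nsec x) : germ_eqv p q -> germ_eqv q p.
Proof. by move=> [W [Wx [WUp [WUq pq]]]]; exists W; split=> //; exists WUq, WUp. Qed.

Lemma germ_eqv_trans x (p q r : nsec x) : germ_eqv p q -> germ_eqv q r -> germ_eqv p r.
Proof.
move=> [W1 [W1x [W1p [W1q pq]]]] [W2 [W2x [W2q [W2r qr]]]].
exists (opI W1 W2); split; first by split.
have W12_1 : proj1_sig (opI W1 W2) `<=` proj1_sig W1 by exact: subIsetl.
have W12_2 : proj1_sig (opI W1 W2) `<=` proj1_sig W2 by exact: subIsetr.
have W12q : proj1_sig (opI W1 W2) `<=` proj1_sig (nsU q) by exact: subset_trans W12_1 W1q.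
exists (subset_trans W12_1 W1p), (subset_trans W12_2 W2r).
rewrite -(res_res W1p W12_1) pq (res_res _ _ W12q) -(res_res W2q W12_2 W12q) qr.
exact: res_res.
Qed.

Definition stalk (x : X) := {C : set (nsec x) | exists p, C = germ_eqv p}.

Definition germ x (p : nsec x) : stalk x := exist _ (germ_eqv p) (ex_intro _ p erefl).

Lemma germ_eqP x (p q : nsec x) : germ p = germ q <-> germ_eqv p q.
Proof.
split=> [/(congr1 (@proj1_sig _ _)) /= ->|pq]; first exact: germ_eqv_refl.
apply: eq_exist_uncurried.
have pq_eq : germ_eqv p = germ_eqv q.
  apply/funext => r; apply/propext; split; last exact: germ_eqv_trans.
  exact: germ_eqv_trans (germ_eqv_sym pq).
by exists pq_eq; exact: Prop_irrelevance.
Qed.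

Lemma germ_surj x (g : stalk x) : exists p, g = germ p.
Proof. by case: g => C [p pC]; exists p; subst C; congr exist; exact: Prop_irrelevance. Qed.

Definition stalk_repr x (g : stalk x) : nsec x := proj1_sig (cid (germ_surj g)).

Lemma stalk_reprK x (g : stalk x) :
  g = germ (NSec (nsx (stalk_repr g)) (nss (stalk_repr g))).
Proof. by rewrite /stalk_repr; case: (cid (germ_surj g)) => -[U Ux t] /=. Qed.

Lemma germ_res x (U V : opens X) (VU : proj1_sig V `<=` proj1_sig U) (Vx : proj1_sig V x)
    (Ux : proj1_sig U x) (t : sec P U) :
  germ (NSec Vx (res VU t)) = germ (NSec Ux t).
Proof. by apply/germ_eqP; exists V; split=> //; exists (@subset_refl _ _), VU; exact: res_refl. Qed.

Lemma germ_irr x (U : opens X) (Ux Ux' : proj1_sig U x) (t : sec P U) :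
  germ (NSec Ux t) = germ (NSec Ux' t).
Proof. by rewrite (Prop_irrelevance Ux Ux'). Qed.

Definition germ_family (S : Type) (xs : S -> X) (U : opens X) (t : sec P U) :
  pfam (fun s => stalk (xs s)) :=
  fun s => if pselect (proj1_sig U (xs s)) is left Uxs then Some (germ (NSec Uxs t)) else None.

Lemma germ_family_in (S : Type) (xs : S -> X) (U : opens X) (t : sec P U) s
    (Uxs : proj1_sig U (xs s)) :
  germ_family xs t s = Some (germ (NSec Uxs t)).
Proof. by rewrite /germ_family; case: pselect => // Uxs'; rewrite (Prop_irrelevance Uxs' Uxs). Qed.

Lemma germ_family_mdef (S : Type) (mu : set_system S) {mu_filter : Filter mu} (xs : S -> X)
    (x : X) (U : opens X) (t : sec P U) :
  ulim mu xs x -> proj1_sig U x -> mdef mu (germ_family xs t).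
Proof.
move=> xs_x Ux; apply: filterS (ulim_open xs_x (proj2_sig U) Ux) => s /= Uxs.
by rewrite (germ_family_in t Uxs).
Qed.

Lemma germ_family_agree (S : Type) (mu : set_system S) {mu_filter : Filter mu} (xs : S -> X)
    (x : X) (U U' : opens X) (Ux : proj1_sig U x) (U'x : proj1_sig U' x) (t : sec P U)
    (t' : sec P U') :
  ulim mu xs x -> germ_eqv (NSec Ux t) (NSec U'x t') ->
  uagree mu (germ_family xs t) (germ_family xs t').
Proof.
move=> xs_x [W [Wx [WU [WU' tt']]]].
apply: filterS (ulim_open xs_x (proj2_sig W) Wx) => s /= Wxs.
rewrite (germ_family_in t (WU _ Wxs)) (germ_family_in t' (WU' _ Wxs)); split=> //.
by congr Some; apply/germ_eqP; exists W; split=> //; exists WU, WU'.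
Qed.

Definition stalk_sigma (S : Type) (mu : set_system S) (hU : UltraFilter mu) (xs : S -> X)
    (x : X) (h : ulim mu xs x) (g : stalk x) : ultraprod (fun s => stalk (xs s)) mu :=
  mkclass (germ_family_mdef (nss (stalk_repr g)) h (nsx (stalk_repr g))).

Lemma stalk_sigma_germ (S : Type) (mu : set_system S) (hU : UltraFilter mu) (xs : S -> X)
    (x : X) (h : ulim mu xs x) (g : stalk x) (U : opens X) (Ux : proj1_sig U x)
    (t : sec P U) :
  g = germ (NSec Ux t) -> proj1_sig (stalk_sigma hU h g) = class_of mu (germ_family xs t).
Proof.
move=> gt; apply: class_of_agree.
apply: (germ_family_agree (Ux := nsx (stalk_repr g)) (U'x := Ux) h); apply/germ_eqP.
by rewrite -stalk_reprK.
Qed.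

Lemma stalk_delta (S : Type) (s0 : S) (hU : UltraFilter (delta s0)) (xs : S -> X)
    (h : ulim (delta s0) xs (xs s0)) (g : stalk (xs s0)) :
  exists p, proj1_sig (stalk_sigma hU h g) p /\ p s0 = Some g.
Proof.
exists (germ_family xs (nss (stalk_repr g))); split.
  rewrite (stalk_sigma_germ hU h (stalk_reprK g)).
  by apply: class_of_mem; exact: germ_family_mdef h (nsx _).
by rewrite (germ_family_in _ (nsx (stalk_repr g))) -stalk_reprK.
Qed.

Lemma stalk_assoc (S T : Type) (mu : set_system S) (hmu : UltraFilter mu)
    (nu : S -> set_system T) (hnu : forall s, UltraFilter (nu s))
    (hU : UltraFilter (uint mu nu)) (xs : T -> X) (ys : S -> X) (x : X)
    (hs : forall s, ulim (nu s) xs (ys s)) (h2 : ulim mu ys x)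
    (h1 : ulim (uint mu nu) xs x) (g : stalk x) :
  Delta_set mu (nu := nu) (proj1_sig (stalk_sigma hU h1 g)) =
  umap_set mu (fun s b => stalk_sigma (hnu s) (hs s) b) (proj1_sig (stalk_sigma hmu h2 g)).
Proof.
set U := nsU (stalk_repr g); set t := nss (stalk_repr g).
have Ux : proj1_sig U x := nsx (stalk_repr g).
have gt : g = germ (NSec Ux t) by rewrite [LHS]stalk_reprK; exact: germ_irr.
pose (q := (fun s => if pselect (proj1_sig U (ys s)) is left Uys
  then Some (mkclass (germ_family_mdef t (hs s) Uys)) else None)
  : pfam (fun s => ultraprod (fun t => stalk (xs t)) (nu s))).
have q_in s (Uys : proj1_sig U (ys s)) :
    q s = Some (mkclass (germ_family_mdef t (hs s) Uys)).
  by rewrite /q; case: pselect => // Uys'; rewrite (Prop_irrelevance Uys' Uys).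
have muU : mu [set s | proj1_sig U (ys s)] := ulim_open h2 (proj2_sig U) Ux.
have t_def1 : mdef (uint mu nu) (germ_family xs t) by exact: germ_family_mdef h1 Ux.
rewrite (stalk_sigma_germ hU h1 gt) (stalk_sigma_germ hmu h2 gt).
rewrite umap_class_of; last exact: germ_family_mdef h2 Ux.
rewrite (@Delta_class_of _ _ _ _ _ _ _ _ (germ_family xs t) q).
- apply: class_of_agree; apply: filterS muU => s /= Uys.
  rewrite /pfam_map (germ_family_in t Uys) (q_in s Uys); split=> //; congr Some.
  by apply: ultraprod_eq; symmetry; exact: stalk_sigma_germ.
- exact: class_of_uclass.
- exact: class_of_mem.
- apply: filterS muU => s /= Uys; rewrite (q_in s Uys); eexists; split; first by [].
  by apply: class_of_mem; exact: germ_family_mdef (hs s) Uys.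
Qed.

Definition stalk_ultrafunctor : left_ultrafunctor X :=
  @MkLU X stalk (fun S mu hU xs x h g => stalk_sigma hU h g) stalk_delta stalk_assoc.

End Stalks.

Section StalkMap.
Variables (X : topologicalType) (P Q : sheaf X) (al : sheaf_hom P Q).

Definition stalk_map (x : X) (g : stalk P x) : stalk Q x :=
  germ (NSec (nsx (stalk_repr g)) (proj1_sig al _ (nss (stalk_repr g)))).

Lemma stalk_map_germ (x : X) (U : opens X) (Ux : proj1_sig U x) (t : sec P U) :
  stalk_map (germ (NSec Ux t)) = germ (NSec Ux (proj1_sig al U t)).
Proof.
apply/germ_eqP; move: (stalk_reprK (germ (NSec Ux t))) => /esym /germ_eqP.
move=> [W [Wx [WU1 [WU2 tt']]]]; exists W; split=> //; exists WU1, WU2 => /=.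
by rewrite -!(proj2_sig al) /= tt'.
Qed.

Lemma stalk_map_hom (S : Type) (mu : set_system S) (hU : UltraFilter mu) (xs : S -> X)
    (x : X) (h : ulim mu xs x) (g : stalk P x) :
  umap_set mu (fun s => @stalk_map (xs s)) (proj1_sig (stalk_sigma hU h g)) =
  proj1_sig (stalk_sigma hU h (stalk_map g)).
Proof.
rewrite (stalk_sigma_germ hU h (stalk_reprK g)) (stalk_sigma_germ hU h (erefl (stalk_map g))).
rewrite umap_class_of; last exact: germ_family_mdef h (nsx _).
congr class_of; apply: functional_extensionality_dep => s.
by rewrite /pfam_map /germ_family; case: pselect => // Uxs; rewrite stalk_map_germ.
Qed.

Definition stalk_map_LU : LU_hom (stalk_ultrafunctor P) (stalk_ultrafunctor Q) :=
  exist _ stalk_map stalk_map_hom.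

End StalkMap.

Section StalkFunctor.
Variable X : topologicalType.

Lemma stalk_map_id (P : sheaf X) : stalk_map_LU (sheaf_id P) = LU_id (stalk_ultrafunctor P).
Proof.
apply: LU_hom_eq; apply: functional_extensionality_dep => x /=.
by apply: funext => g; rewrite /stalk_map /= -stalk_reprK.
Qed.

Lemma stalk_map_comp (P Q T : sheaf X) (be : sheaf_hom Q T) (al : sheaf_hom P Q) :
  stalk_map_LU (sheaf_comp be al) = LU_comp (stalk_map_LU be) (stalk_map_LU al).
Proof.
apply: LU_hom_eq; apply: functional_extensionality_dep => x /=.
by apply: funext => g; rewrite [stalk_map al g]/stalk_map stalk_map_germ.
Qed.

Definition stalk_functor : Functor (Sh X) (LeftUlt X) :=
  @MkFunctor (Sh X) (LeftUlt X) (@stalk_ultrafunctor X) (@stalk_map_LU X)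
    stalk_map_id stalk_map_comp.

End StalkFunctor.

(** * A sheaf is recovered from its stalks *)

Lemma nbhs_opens (X : topologicalType) (x : X) (N : set X) :
  nbhs x N -> exists W : opens X, proj1_sig W x /\ proj1_sig W `<=` N.
Proof. by rewrite nbhsE => -[O [oO Ox] ON]; exists (exist _ O oO). Qed.

Lemma nbhs_opensI (X : topologicalType) (x : X) (N : set X) (U V : opens X) :
  nbhs x N -> proj1_sig U x -> proj1_sig V x -> nbhs x (N `&` proj1_sig U `&` proj1_sig V).
Proof.
move=> nN Ux Vx; apply: filterI; first apply: filterI => //.
  exact: open_nbhs_nbhs (conj (proj2_sig U) Ux).
exact: open_nbhs_nbhs (conj (proj2_sig V) Vx).
Qed.

Section SheafFromStalks.
Variables (X : topologicalType) (P : sheaf X).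

Lemma germ_csec_compatible (U : opens X) (t : sec P U) :
  compatible (F := stalk_ultrafunctor P) (fun y (Uy : proj1_sig U y) => germ (NSec Uy t)).
Proof.
move=> S mu hU xs y Uy h.
have : class_of mu (germ_family xs t) (germ_family xs t).
  by apply: class_of_mem; exact: germ_family_mdef h Uy.
by rewrite -(stalk_sigma_germ hU h (erefl (germ (NSec Uy t)))).
Qed.

Definition germ_csec (U : opens X) (t : sec P U) : csec (stalk_ultrafunctor P) U :=
  exist _ _ (germ_csec_compatible t).

Definition sheaf_to_germs : sheaf_hom P (section_sheaf (stalk_ultrafunctor P)).
Proof. by exists germ_csec => U V VU t; apply: csec_eq => y Vy /=; exact: germ_res. Defined.

Lemma sheaf_germ_ext (U : opens X) (t1 t2 : sec P U) :
  (forall y (Uy : proj1_sig U y), germ (NSec Uy t1) = germ (NSec Uy t2)) -> t1 = t2.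
Proof.
move=> t12; pose I := {y : X | proj1_sig U y}.
have loc_eq (i : I) : exists W : opens X, proj1_sig W (proj1_sig i) /\
    exists WU : proj1_sig W `<=` proj1_sig U, res WU t1 = res WU t2.
  case: i => y Uy /=; have /germ_eqP [W [Wy [WU1 [WU2 t12W]]]] := t12 y Uy.
  by exists W; split=> //; exists WU1; rewrite t12W (Prop_irrelevance WU1 WU2).
pose Ui (i : I) := proj1_sig (cid (loc_eq i)).
have UiU i : proj1_sig (Ui i) `<=` proj1_sig U by have [_ [WU _]] := proj2_sig (cid (loc_eq i)).
have U_cover : proj1_sig U `<=` \bigcup_i proj1_sig (Ui i).
  by move=> y Uy; exists (exist _ y Uy) => //; have [] := proj2_sig (cid (loc_eq (exist _ y Uy))).
have t1_agree i j : res (V := opI (Ui i) (Ui j)) (@subIsetl _ _ _) (res (UiU i) t1) =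
    res (V := opI (Ui i) (Ui j)) (@subIsetr _ _ _) (res (UiU j) t1).
  by rewrite !res_comp; exact: res_irr.
have [t [_ t_uniq]] := gluing UiU U_cover t1_agree.
rewrite -(t_uniq t1 (fun=> erefl)); apply: t_uniq => i.
by have [_ [WU t12W]] := proj2_sig (cid (loc_eq i)); rewrite !(res_irr (UiU i) WU) t12W.
Qed.

Lemma germ_csec_local (U : opens X) (g : csec (stalk_ultrafunctor P) U) (y : X)
    (Uy : proj1_sig U y) :
  exists W : opens X, proj1_sig W y /\ proj1_sig W `<=` proj1_sig U /\
    exists tW : sec P W, forall z (Wz : proj1_sig W z) (Uz : proj1_sig U z),
      germ (NSec Wz tW) = proj1_sig g z Uz.
Proof.
set r := stalk_repr (proj1_sig g y Uy); set V := nsU r; set t := nss r.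
have [N [nN gN]] := csec_agree_near (s1 := g) (s2 := germ_csec t)
  (U1x := Uy) (U2x := nsx r) (stalk_reprK _).
have [W [Wy WNUV]] := nbhs_opens (nbhs_opensI nN Uy (nsx r)).
have WV : proj1_sig W `<=` proj1_sig V by move=> z /WNUV [].
exists W; split=> //; split=> [z /WNUV [[]] //|].
exists (res WV t) => z Wz Uz; rewrite (germ_res _ _ (WV z Wz)).
by have [[Nz _] Vz] := WNUV z Wz; rewrite (gN z Uz (WV z Wz) Nz).
Qed.

Lemma germ_csec_glue (U : opens X) (g : csec (stalk_ultrafunctor P) U) :
  exists t : sec P U, forall y (Uy : proj1_sig U y), germ (NSec Uy t) = proj1_sig g y Uy.
Proof.
pose I := {y : X | proj1_sig U y}.
pose loc (i : I) := germ_csec_local g (proj2_sig i).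
pose Ui (i : I) := proj1_sig (cid (loc i)).
have Uii i : proj1_sig (Ui i) (proj1_sig i) by have [] := proj2_sig (cid (loc i)).
have UiU i : proj1_sig (Ui i) `<=` proj1_sig U by have [_ []] := proj2_sig (cid (loc i)).
have sec_ex i : exists tW : sec P (Ui i), forall z (Wz : proj1_sig (Ui i) z)
    (Uz : proj1_sig U z), germ (NSec Wz tW) = proj1_sig g z Uz.
  by have [_ [_]] := proj2_sig (cid (loc i)).
pose s (i : I) := proj1_sig (cid (sec_ex i)).
have sP i z Wz Uz : germ (NSec Wz (s i)) = proj1_sig g z Uz := proj2_sig (cid (sec_ex i)) z Wz Uz.
have U_cover : proj1_sig U `<=` \bigcup_i proj1_sig (Ui i).
  by move=> y Uy; exists (exist _ y Uy) => //; exact: (Uii (exist _ y Uy)).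
have s_agree i j : res (V := opI (Ui i) (Ui j)) (@subIsetl _ _ _) (s i) =
    res (V := opI (Ui i) (Ui j)) (@subIsetr _ _ _) (s j).
  apply: sheaf_germ_ext => z [Uiz Ujz].
  rewrite (germ_res _ _ Uiz) (germ_res _ _ Ujz).
  by rewrite (sP i z _ (UiU i z Uiz)) (sP j z _ (UiU i z Uiz)).
have [t [t_res _]] := gluing UiU U_cover s_agree.
exists t => y Uy; pose i : I := exist _ y Uy.
by rewrite -(germ_res (UiU i) (Uii i)) t_res; exact: sP.
Qed.

Definition germs_to_sheaf_fun (U : opens X) (g : csec (stalk_ultrafunctor P) U) : sec P U :=
  proj1_sig (cid (germ_csec_glue g)).

Lemma germs_to_sheaf_funP (U : opens X) (g : csec (stalk_ultrafunctor P) U) y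
    (Uy : proj1_sig U y) :
  germ (NSec Uy (germs_to_sheaf_fun g)) = proj1_sig g y Uy.
Proof. exact: (proj2_sig (cid (germ_csec_glue g))). Qed.

Definition germs_to_sheaf : sheaf_hom (section_sheaf (stalk_ultrafunctor P)) P.
Proof.
exists germs_to_sheaf_fun => U V VU g; apply: sheaf_germ_ext => y Vy.
by rewrite germs_to_sheaf_funP (germ_res VU Vy (VU y Vy)) germs_to_sheaf_funP.
Defined.

End SheafFromStalks.

Lemma section_stalk_iso (X : topologicalType) :
  @nat_iso (Sh X) (Sh X) (fun P => fob (section_functor X) (fob (stalk_functor X) P))
    (@idFunctor_ob (Sh X))
    (fun P Q al => fhom (section_functor X) (fhom (stalk_functor X) al)) (fun P Q al => al).
Proof.
exists (@germs_to_sheaf X), (@sheaf_to_germs X); split; [|split].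
- move=> P; apply: sheaf_hom_eq; apply: functional_extensionality_dep => U.
  by apply: funext => t /=; apply: sheaf_germ_ext => y Uy; rewrite germs_to_sheaf_funP.
- move=> P; apply: sheaf_hom_eq; apply: functional_extensionality_dep => U.
  by apply: funext => g /=; apply: csec_eq => y Uy /=; exact: germs_to_sheaf_funP.
- move=> P Q al; apply: sheaf_hom_eq; apply: functional_extensionality_dep => U.
  apply: funext => g /=; apply: sheaf_germ_ext => y Uy.
  by rewrite germs_to_sheaf_funP /= -stalk_map_germ germs_to_sheaf_funP.
Qed.

(** * Local sections of a left ultrafunctor *)

Section PartialFamilies.
Variables (S : Type) (M : S -> Type).
Implicit Types (b c : pfam M) (D : set S).

Definition pdom b : set S := [set s | b s <> None].

Definition pfam_restr D b : pfam M := fun s => if pselect (D s) then b s else None.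

Lemma pfam_restr_in D b s : D s -> pfam_restr D b s = b s.
Proof. by rewrite /pfam_restr; case: pselect. Qed.

Lemma pdom_restr D b : pdom (pfam_restr D b) = D `&` pdom b.
Proof.
by apply/seteqP; split=> s; rewrite /pdom /pfam_restr /=; case: pselect => // Ds [].
Qed.

Definition pfam_join b c : pfam M := fun s => if b s is Some e then Some e else c s.

Lemma pdom_join b c : pdom (pfam_join b c) = pdom b `|` pdom c.
Proof.
apply/seteqP; split=> s; rewrite /pdom /pfam_join /=; case: (b s) => [e|] //=.
- by left.
- by right.
- by case.
Qed.

End PartialFamilies.

Section LocalSections.
Variables (X : topologicalType) (F : left_ultrafunctor X).
Implicit Type b : pfam (fun z : X => LUF F z).

Definition represents (x : X) (a : LUF F x) b : Prop :=
  forall (nu : set_system X) (hnu : UltraFilter nu) (h : ulim nu id x),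
    nu (pdom b) -> proj1_sig (sigma hnu h a) b.

Definition represents_at b (y : X) : Prop :=
  exists e : LUF F y, b y = Some e /\
    forall (nu : set_system X) (hnu : UltraFilter nu) (h : ulim nu id y),
      proj1_sig (sigma hnu h e) b.

Variables (x : X) (a : LUF F x).

Lemma represents_none : represents a (fun _ => None).
Proof. by move=> nu hnu h nu0; exfalso; apply: (filter_not_empty nu); apply: filterS nu0. Qed.

Lemma represents_join b c : represents a b -> represents a c -> represents a (pfam_join b c).
Proof.
move=> ab ac nu hnu h; rewrite pdom_join => nu_bc.
have [nu_b|nu_nb] := in_ultra_setVsetC (pdom b) hnu.
  apply: (uclass_closed (proj2_sig _) (ab nu hnu h nu_b)); apply: filterS nu_b => z.
  by rewrite /pdom /pfam_join /=; case: (b z).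
have nu_c : nu (pdom c) by apply: filterS (filterI nu_bc nu_nb) => z [[]].
apply: (uclass_closed (proj2_sig _) (ac nu hnu h nu_c)).
apply: filterS (filterI nu_nb nu_c) => z [nbz cz].
have bz : b z = None by apply: contrapT.
by rewrite /= /pfam_join bz; split.
Qed.

(* Every ultrafilter [nu] converging to [x] is the integral [int nu_D dMu] of
   ultrafilters [nu_D] witnessing that the restrictions of a representative
   [b] of [sigma_nu a] to the members [D] of [nu] do not represent [a];
   associativity then makes [b] represent [sigma_{nu_D} a] for some [D], absurd. *)
Lemma exists_represents_ultra (nu : set_system X) (hnu : UltraFilter nu) (h : ulim nu id x) :
  exists b, represents a b /\ nu (pdom b).
Proof.
apply: contrapT => no_rep.
have [b ab] := uclass_inhabited (proj2_sig (sigma hnu h a)).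
have nu_b : nu (pdom b) by exact: uclass_mdef (proj2_sig _) ab.
pose I := {D : set X | nu D}.
have bad (D : I) : exists nuD : set_system X, UltraFilter nuD /\ ulim nuD id x /\
    nuD (proj1_sig D `&` pdom b) /\
    forall (hU' : UltraFilter nuD) (h' : ulim nuD id x),
      ~ proj1_sig (sigma hU' h' a) (pfam_restr (proj1_sig D) b).
  case: D => D nuD /=; apply: contrapT => all_good; apply: no_rep.
  exists (pfam_restr D b); split; last by rewrite pdom_restr; exact: filterI.
  move=> nu' hnu' h'; rewrite pdom_restr => nu'D; apply: contrapT => nab; apply: all_good.
  exists nu'; split=> //; split=> //; split=> // hU'' h''.
  by rewrite (sigma_irr erefl hU'' hnu' h'' h').
pose nuD (D : I) := proj1_sig (cid (bad D)).
have hnuD D : UltraFilter (nuD D) by have [] := proj2_sig (cid (bad D)).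
have hsD D : ulim (nuD D) id x by have [_ []] := proj2_sig (cid (bad D)).
have nuD_b D : nuD D (proj1_sig D `&` pdom b) by have [_ [_ []]] := proj2_sig (cid (bad D)).
have nuD_bad D : forall (hU' : UltraFilter (nuD D)) (h' : ulim (nuD D) id x),
    ~ proj1_sig (sigma hU' h' a) (pfam_restr (proj1_sig D) b).
  by have [_ [_ [_]]] := proj2_sig (cid (bad D)).
have [Mu [UMu Mu_tail]] := ultra_tail (ultra_proper : ProperFilter nu).
have nu_int : nu = uint Mu nuD.
  apply: esym; apply: max_filter; first exact: uint_proper.
  move=> E nuE; apply: filterS (Mu_tail E nuE) => D /= DE.
  by apply: filterS (nuD_b D) => z [/DE].
have hU1 := uint_ultra UMu hnuD.
have h2 : ulim Mu (fun _ => x) x by move=> A /nbhs_singleton Ax /=; apply: filterS filterT.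
have h1 : ulim (uint Mu nuD) id x by rewrite -nu_int.
have ab1 : proj1_sig (sigma hU1 h1 a) b by rewrite -(sigma_irr nu_int hnu hU1 h h1).
apply: (filter_not_empty Mu).
apply: filterS (sigma_assoc_ae hnuD hsD (sigma_const UMu h2 a) ab1) => D [e [[<-] ab_D]].
apply: (nuD_bad D (hnuD D) (hsD D)); apply: (uclass_closed (proj2_sig _) ab_D).
apply: filterS (nuD_b D) => z [Dz bz]; split=> //.
by rewrite pfam_restr_in.
Qed.

(* Otherwise the sets [N \ pdom b], [N] a neighbourhood of [x] and [b]
   representing [a], generate a proper filter converging to [x], contradicting
   the previous lemma. *)
Lemma exists_represents_nbhs : exists b, represents a b /\ nbhs x (pdom b).
Proof.
apply: contrapT => no_rep.
pose Z := [set A : set X | exists b, represents a b /\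
  exists N, nbhs x N /\ N `\` pdom b `<=` A].
have PZ : ProperFilter Z.
  apply: Build_ProperFilter_ex => [A [b [ab [N [nN NbA]]]]|].
    apply: contrapT => A0; apply: no_rep; exists b; split=> //.
    apply: filterS nN => z Nz; apply: contrapT => nbz; apply: A0.
    by exists z; apply: NbA.
  split=> [|A1 A2 [b1 [ab1 [N1 [n1 s1]]]] [b2 [ab2 [N2 [n2 s2]]]]|A1 A2 A12].
  - exists (fun _ => None); split; first exact: represents_none.
    by exists setT; split; first exact: filterT.
  - exists (pfam_join b1 b2); split; first exact: represents_join.
    exists (N1 `&` N2); split; first exact: filterI.
    move=> z [[N1z N2z]]; rewrite pdom_join => /not_orP [nb1z nb2z].
    by split; [exact: s1|exact: s2].
  - by move=> [b [ab [N [nN NbA]]]]; exists b; split=> //; exists N; split=> // z /NbA /A12.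
have [nu [Unu Znu]] := ultraFilterLemma PZ.
have nu_x : ulim nu id x.
  move=> A nA; apply: Znu; exists (fun _ => None); split; first exact: represents_none.
  by exists A; split=> // z [].
have [b [ab nu_b]] := exists_represents_ultra Unu nu_x.
have nu_nb : nu (~` pdom b).
  by apply: Znu; exists b; split=> //; exists setT; split=> [|z []//]; exact: filterT.
apply: (filter_not_empty nu); rewrite -(setICr (pdom b)); exact: filterI.
Qed.

Lemma represents_value b : represents a b -> nbhs x (pdom b) -> b x = Some a.
Proof.
move=> ab nb; have hd : ulim (delta x) id x := ulim_delta (xs := id).
apply: (sigma_delta_at (hU := delta_ultra x) (h := hd)).
exact: ab (nbhs_singleton nb).
Qed.

End LocalSections.

Section LocalSectionsNear.
Variables (X : topologicalType) (F : left_ultrafunctor X).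
Implicit Type b : pfam (fun z : X => LUF F z).

Lemma not_represents_at b (y : X) (e : LUF F y) : b y = Some e -> ~ represents_at b y ->
  exists nu : set_system X, UltraFilter nu /\ ulim nu id y /\
    forall (hnu : UltraFilter nu) (h : ulim nu id y), ~ proj1_sig (sigma hnu h e) b.
Proof.
move=> bye not_rep; apply: contrapT => all_rep; apply: not_rep; exists e; split=> // nu hnu h.
apply: contrapT => not_e; apply: all_rep; exists nu; split=> //; split=> // hnu' h'.
by rewrite (sigma_irr erefl hnu' hnu h' h).
Qed.

(* If [b] failed to represent its values near [x], an ultrafilter [Mu]
   converging to [x] would carry witnesses [nu_z] of failure at [Mu]-almost
   every [z]; associativity for [int nu_z dMu] contradicts them. *)
Lemma represents_at_near (x : X) (a : LUF F x) b :
  represents a b -> nbhs x (pdom b) -> nbhs x [set y | represents_at b y].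
Proof.
move=> ab nb; apply: contrapT => not_near.
pose B := pdom b `&` ~` [set y | represents_at b y].
have [Mu [UMu [Mu_x MuB]]] : exists Mu : set_system X, UltraFilter Mu /\ ulim Mu id x /\ Mu B.
  apply: ultra_ulim_meets => N nN; apply: contrapT => NB; apply: not_near.
  apply: filterS (filterI nN nb) => y [Ny by_def]; apply: contrapT => nrep.
  by apply: NB; exists y.
have pick z : exists nu : set_system X, UltraFilter nu /\ ulim nu id z /\
    (B z -> exists e, b z = Some e /\
       forall (hnu : UltraFilter nu) (h : ulim nu id z), ~ proj1_sig (sigma hnu h e) b).
  have [[bz nrep]|nBz] := pselect (B z); last first.
    by exists (delta z); split; [exact: delta_ultra|split=> //; exact: ulim_delta].
  move: bz; rewrite /pdom /=; case bze: (b z) => [e|//] _.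
  have [nu [hnu [h not_e]]] := not_represents_at bze nrep.
  by exists nu; split=> //; split=> // _; exists e.
pose nuz z := proj1_sig (cid (pick z)).
have hnuz z : UltraFilter (nuz z) by have [] := proj2_sig (cid (pick z)).
have hsz z : ulim (nuz z) id z by have [_ []] := proj2_sig (cid (pick z)).
have nuz_bad z : B z -> exists e, b z = Some e /\
    forall (hnu : UltraFilter (nuz z)) (h : ulim (nuz z) id z), ~ proj1_sig (sigma hnu h e) b.
  by have [_ [_]] := proj2_sig (cid (pick z)).
have hU1 := uint_ultra UMu hnuz.
have h1 : ulim (uint Mu nuz) id x.
  move=> A; rewrite nbhsE => -[O [oO Ox] OA] /=.
  apply: filterS (ulim_open Mu_x oO Ox) => z /= Oz.
  by apply: filterS (ulim_open (hsz z) oO Oz) => t /OA.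
have abMu : proj1_sig (sigma UMu Mu_x a) b by apply: ab; apply: filterS MuB => z [].
have abU : proj1_sig (sigma hU1 h1 a) b by apply: ab; exact: h1.
apply: (filter_not_empty Mu); apply: filterS (filterI (sigma_assoc_ae hnuz hsz abMu abU) MuB).
move=> z [[e [bze eb]] /nuz_bad [e' [bze' not_e']]].
by move: bze'; rewrite bze => -[ee']; subst e'; exact: not_e' eb.
Qed.

Lemma exists_local_section (x : X) (a : LUF F x) :
  exists (U : opens X) (Ux : proj1_sig U x) (s : csec F U), proj1_sig s x Ux = a.
Proof.
have [b [ab nb]] := exists_represents_nbhs a.
have [U [Ux Urep]] := nbhs_opens (represents_at_near ab nb).
pose s0 y (Uy : proj1_sig U y) := proj1_sig (cid (Urep y Uy)).
have s0_b y Uy : b y = Some (s0 y Uy) := proj1 (proj2_sig (cid (Urep y Uy))).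
have s0_rep y Uy : forall (nu : set_system X) (hnu : UltraFilter nu) (h : ulim nu id y),
    proj1_sig (sigma hnu h (s0 y Uy)) b := proj2 (proj2_sig (cid (Urep y Uy))).
have s0_compat : compatible s0.
  move=> S mu hU xs y Uy h.
  apply: (uclass_closed (proj2_sig _) (sigma_pushforward hU h (s0_rep y Uy _))).
  apply: filterS (ulim_open h (proj2_sig U) Uy) => i Uxi.
  by rewrite /= (section_family_in s0 Uxi) s0_b.
exists U, Ux, (exist _ s0 s0_compat) => /=.
by move: (represents_value ab nb); rewrite s0_b => -[].
Qed.

End LocalSectionsNear.

(** * A left ultrafunctor is recovered from its sections *)

Section UltrafunctorFromSections.
Variables (X : topologicalType) (F : left_ultrafunctor X).

Definition germ_value (x : X) (g : stalk (section_sheaf F) x) : LUF F x :=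
  proj1_sig (nss (stalk_repr g)) x (nsx (stalk_repr g)).

Lemma germ_valueE (x : X) (U : opens X) (Ux : proj1_sig U x) (s : csec F U) :
  germ_value (germ (NSec (P := section_sheaf F) Ux s)) = proj1_sig s x Ux.
Proof.
move: (stalk_reprK (germ (NSec (P := section_sheaf F) Ux s))) => /esym /germ_eqP.
move=> [W [Wx [WU1 [WU2 /(congr1 (fun r : csec F W => proj1_sig r x Wx)) /= s12]]]].
rewrite /germ_value (Prop_irrelevance (nsx _) (WU1 x Wx)) s12.
by congr (proj1_sig s x); exact: Prop_irrelevance.
Qed.

Lemma germ_value_hom (S : Type) (mu : set_system S) (hU : UltraFilter mu) (xs : S -> X)
    (x : X) (h : ulim mu xs x) (g : stalk (section_sheaf F) x) :
  umap_set mu (fun s => @germ_value (xs s)) (proj1_sig (stalk_sigma hU h g)) =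
  proj1_sig (sigma hU h (germ_value g)).
Proof.
rewrite (stalk_sigma_germ hU h (stalk_reprK g)) umap_class_of; last first.
  exact: germ_family_mdef h (nsx _).
have s_cl := proj2_sig (nss (stalk_repr g)) S mu hU xs x (nsx (stalk_repr g)) h.
rewrite (uclass_class_of (proj2_sig _) s_cl); congr class_of.
apply: functional_extensionality_dep => i; rewrite /pfam_map /germ_family /section_family.
by case: pselect => // Uxi; rewrite germ_valueE.
Qed.

Definition germ_value_LU : LU_hom (stalk_ultrafunctor (section_sheaf F)) F :=
  exist _ germ_value germ_value_hom.

Definition value_germ (x : X) (a : LUF F x) : stalk (section_sheaf F) x :=
  let: exist U U_ex := cid (exists_local_section a) in
  let: exist Ux s_ex := cid U_ex in
  germ (NSec (P := section_sheaf F) Ux (proj1_sig (cid s_ex))).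

Lemma germ_valueK (x : X) (a : LUF F x) : germ_value (value_germ a) = a.
Proof.
rewrite /value_germ; case: cid => U U_ex; case: cid => Ux s_ex.
by rewrite germ_valueE; case: cid.
Qed.

Lemma value_germK (x : X) (g : stalk (section_sheaf F) x) : value_germ (germ_value g) = g.
Proof.
rewrite [in RHS](stalk_reprK g) /value_germ; case: cid => U U_ex; case: cid => Ux s_ex.
case: cid => s sx; apply/germ_eqP.
have [N [nN sN]] := csec_agree_near sx.
have [W [Wx WNUV]] := nbhs_opens (nbhs_opensI nN Ux (nsx (stalk_repr g))).
have WU : proj1_sig W `<=` proj1_sig U by move=> z /WNUV [[]].
have WV : proj1_sig W `<=` proj1_sig (nsU (stalk_repr g)) by move=> z /WNUV [].
exists W; split=> //; exists WU, WV; apply: csec_eq => z Wz /=.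
by have [[Nz _] _] := WNUV z Wz; exact: sN.
Qed.

Lemma value_germ_hom (S : Type) (mu : set_system S) (hU : UltraFilter mu) (xs : S -> X)
    (x : X) (h : ulim mu xs x) (a : LUF F x) :
  umap_set mu (fun s => @value_germ (xs s)) (proj1_sig (sigma hU h a)) =
  proj1_sig (stalk_sigma hU h (value_germ a)).
Proof.
rewrite -{1}(germ_valueK a) -germ_value_hom umap_comp_class; last exact: proj2_sig.
have -> : (fun s (g : stalk (section_sheaf F) (xs s)) => value_germ (germ_value g)) =
          (fun s g => g).
  by apply: functional_extensionality_dep => s; apply: funext => g; exact: value_germK.
by rewrite umap_id_class //; exact: proj2_sig.
Qed.

Definition value_germ_LU : LU_hom F (stalk_ultrafunctor (section_sheaf F)) :=
  exist _ value_germ value_germ_hom.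

End UltrafunctorFromSections.

Lemma stalk_section_iso (X : topologicalType) :
  @nat_iso (LeftUlt X) (LeftUlt X) (fun F => fob (stalk_functor X) (fob (section_functor X) F))
    (@idFunctor_ob (LeftUlt X))
    (fun F G al => fhom (stalk_functor X) (fhom (section_functor X) al)) (fun F G al => al).
Proof.
exists (@germ_value_LU X), (@value_germ_LU X); split; [|split].
- move=> F; apply: LU_hom_eq; apply: functional_extensionality_dep => x.
  by apply: funext => a /=; exact: germ_valueK.
- move=> F; apply: LU_hom_eq; apply: functional_extensionality_dep => x.
  by apply: funext => g /=; exact: value_germK.
- move=> F G al; apply: LU_hom_eq; apply: functional_extensionality_dep => x.
  by apply: funext => g /=; rewrite /stalk_map germ_valueE.
Qed.

Theorem mainTheorem20 (X : topologicalType) :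
  compact [set: X] -> hausdorff_space X ->
  (forall (E : topologicalType) (pi : E -> X),
     (forall x : X, exists e : E, pi e = x) ->
     (is_bundle pi (@discrete_dist E) 1 <-> local_homeomorphism pi)) /\
  (forall (E E' : topologicalType) (pi : E -> X) (pi' : E' -> X),
     is_bundle pi (@discrete_dist E) 1 -> is_bundle pi' (@discrete_dist E') 1 ->
     forall f : E -> E',
       is_bundle_morphism pi pi' (@discrete_dist E) (@discrete_dist E') f <->
       (continuous f /\ forall e : E, pi' (f e) = pi e)) /\
  cat_equivalent (Sh X) (LeftUlt X).
Proof.
move=> _ _; split.
  move=> E pi pi_surj; split; first exact: discrete_bundle_local_homeomorphism.
  exact: local_homeomorphism_discrete_bundle.
split=> [E E' pi pi' _ _ f|]; first exact: discrete_bundle_morphismP.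
exists (stalk_functor X), (section_functor X).
by split; [exact: section_stalk_iso|exact: stalk_section_iso].
Qed.
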